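(* Let $n\ge 1$ be an integer. The game value of \textsc{Snort} played on the star $K_{1,n}$ with no tinted vertices is $\pm n = \{\, n \mid -n \,\}$.
   Context: \textsc{Snort} is a two-player normal-play combinatorial game (the player unable to move loses) between Left (blue) and Right (red), played on a finite simple graph in which each vertex may be tinted blue, tinted red, or untinted. Left may move on any vertex not tinted red; Right may move on any vertex not tinted blue. A move on vertex $v$ deletes $v$ and tints all neighbours of $v$ in the mover's colour; any vertex that thereby becomes tinted in both colours is deleted. Game values are in the standard sense of combinatorial game theory: $\{A \mid B\}$ denotes the game with Left options $A$ and Right options $B$, integers $n$ are the usual integer games, and $\pm G$ denotes $\{G \mid -G\}$. $K_{1,n}$ is the star with one centre vertex adjacent to $n$ leaves. *)

From mathcomp Require Import all_boot.
From Stdlib Require List.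
Set Implicit Arguments. Unset Strict Implicit. Unset Printing Implicit Defensive.

Inductive game : Type := Game : seq game -> seq game -> game.

Definition leftopts (G : game) : seq game := let: Game L _ := G in L.
Definition rightopts (G : game) : seq game := let: Game _ R := G in R.

(* Conway's order: G <= H iff no G^L >= H and no H^R <= G.
   Written positively via the "less or fuzzy" relation  G <| H  (i.e. not H <= G):
     G <= H  iff  every G^L <| H  and  G <| every H^R
     G <| H  iff  G <= some H^L  or  some G^R <= H.
   For short (well-founded) games these mutually inductive relations are the
   unique solution of the recursive definition, i.e. the standard order. *)
Inductive game_le : game -> game -> Prop :=
| game_le_intro G H :
    (forall GL, List.In GL (leftopts G) -> game_lf GL H) ->
    (forall HR, List.In HR (rightopts H) -> game_lf G HR) ->
    game_le G H
with game_lf : game -> game -> Prop :=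
| game_lf_left G H HL : List.In HL (leftopts H) -> game_le G HL -> game_lf G H
| game_lf_right G H GR : List.In GR (rightopts G) -> game_le GR H -> game_lf G H.

Definition game_eq (G H : game) : Prop := game_le G H /\ game_le H G.

Fixpoint game_neg (G : game) : game :=
  match G with Game L R => Game (map game_neg R) (map game_neg L) end.

Fixpoint nat_game (n : nat) : game :=
  match n with 0 => Game [::] [::] | n'.+1 => Game [:: nat_game n'] [::] end.

Definition game_pm (G : game) : game := Game [:: G] [:: game_neg G].

(* A position on the graph (T, e) (e symmetric, irreflexive): the set A of
   remaining vertices, the set B of blue-tinted and the set R of red-tinted
   vertices (only tints of vertices in A matter).  The graph is the subgraph
   induced by A. *)
Section Snort.
Variables (T : finType) (e : rel T).

Definition snort_nbhd (A : {set T}) (v : T) : {set T} := [set u in A | e v u].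

(* Left plays v: delete v, tint its neighbours blue; red-tinted neighbours
   become doubly tinted and are deleted. *)
Definition snortL_A (A R : {set T}) (v : T) : {set T} :=
  (A :\ v) :\: (snort_nbhd A v :&: R).
Definition snortL_B (A B : {set T}) (v : T) : {set T} := B :|: snort_nbhd A v.
Definition snortR_A (A B : {set T}) (v : T) : {set T} :=
  (A :\ v) :\: (snort_nbhd A v :&: B).
Definition snortR_R (A R : {set T}) (v : T) : {set T} := R :|: snort_nbhd A v.

(* fuel k >= #|A| ; each move removes at least one vertex *)
Fixpoint snort_fuel (k : nat) (A B R : {set T}) : game :=
  match k with
  | 0 => Game [::] [::]
  | k'.+1 =>
      Game [seq snort_fuel k' (snortL_A A R v) (snortL_B A B v) R
           | v <- enum A & v \notin R]
           [seq snort_fuel k' (snortR_A A B v) B (snortR_R A R v)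
           | v <- enum A & v \notin B]
  end.

Definition snort (A B R : {set T}) : game := snort_fuel #|A| A B R.
End Snort.

(* the star K_{1,n}: vertex 0 is the centre, vertices 1..n are the leaves *)
Definition star_rel (n : nat) : rel 'I_n.+1 :=
  fun i j => (i == ord0) != (j == ord0).
Arguments star_rel n : clear implicits.

From mathcomp Require Import all_boot.
From Stdlib Require List.

Set Implicit Arguments. Unset Strict Implicit. Unset Printing Implicit Defensive.

(* Every move deletes a vertex, so a position on at most m vertices lies
   between -m and m.  On the star G, Left's move at the centre tints all n
   leaves blue; from then on Left has n free moves and Right none, so that
   option is worth at least n, which gives {n | -n} <= G.  Since G has no
   tints, it is its own negative, and negating the inequality gives
   G <= {n | -n}. *)

Lemma In_mem (T : eqType) (s : seq T) x : List.In x s <-> x \in s.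
Proof.
elim: s => [|y s IHs] //=; rewrite in_cons IHs.
by split=> [[->|->]|/orP[/eqP->|->]]; rewrite ?eqxx ?orbT; auto.
Qed.

Lemma In_map_enum (T : finType) (X : Type) (f : T -> X) (p : pred T)
    (A : {set T}) x :
  List.In x [seq f v | v <- enum A & p v] <-> exists2 v, v \in A & p v /\ x = f v.
Proof.
rewrite List.in_map_iff; split=> [[v [<- /List.filter_In[/In_mem]]]|[v vA [pv ->]]].
  by rewrite mem_enum; exists v.
by exists v; split=> //; apply/List.filter_In; rewrite In_mem mem_enum.
Qed.

Lemma leftopts_neg (G : game) : leftopts (game_neg G) = map game_neg (rightopts G).
Proof. by case: G. Qed.

Lemma rightopts_neg (G : game) : rightopts (game_neg G) = map game_neg (leftopts G).
Proof. by case: G. Qed.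

Scheme game_le_min := Minimality for game_le Sort Prop
  with game_lf_min := Minimality for game_lf Sort Prop.
Combined Scheme game_le_lf_min from game_le_min, game_lf_min.

Lemma game_le_lf_neg :
  (forall G H, game_le G H -> game_le (game_neg H) (game_neg G)) /\
  (forall G H, game_lf G H -> game_lf (game_neg H) (game_neg G)).
Proof.
apply: game_le_lf_min => [G H _ leGL _ leHR|G H HL HLin _ leHL|G H GR GRin _ leGR].
- constructor=> [X|X]; rewrite ?leftopts_neg ?rightopts_neg.
    by case/List.in_map_iff=> HR [<- /leHR].
  by case/List.in_map_iff=> GL [<- /leGL].
- by apply: game_lf_right leHL; rewrite rightopts_neg; apply: List.in_map.
- by apply: game_lf_left leGR; rewrite leftopts_neg; apply: List.in_map.
Qed.

Lemma game_le_neg G H : game_le G H -> game_le (game_neg H) (game_neg G).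
Proof. exact: game_le_lf_neg.1. Qed.

Lemma nat_game_negK n : game_neg (game_neg (nat_game n)) = nat_game n.
Proof. by elim: n => //= n ->. Qed.

Lemma game_pm_nat_neg n : game_neg (game_pm (nat_game n)) = game_pm (nat_game n).
Proof. by rewrite /= nat_game_negK. Qed.

Section SnortBounds.
Variables (T : finType) (e : rel T).

(* Right's move rules are Left's with the roles of B and R exchanged, up to
   conversion. *)
Lemma snort_fuel_neg k (A B R : {set T}) :
  game_neg (snort_fuel e k A B R) = snort_fuel e k A R B.
Proof.
elim: k A B R => [//|k IHk] A B R /=.
by rewrite -!map_comp; congr Game; apply: eq_map => v /=; rewrite IHk.
Qed.

Lemma card_snort_move (A X : {set T}) v : v \in A -> #|(A :\ v) :\: X| < #|A|.
Proof.
move=> vA; rewrite (cardsD1 v A) vA add1n ltnS.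
exact/subset_leq_card/subsetDl.
Qed.

Lemma snortL_A_disjoint (A R : {set T}) v :
  [disjoint A & R] -> snortL_A e A R v = A :\ v.
Proof.
move=> dAR; rewrite /snortL_A (_ : snort_nbhd e A v :&: R = set0) ?setD0 //.
by apply/disjoint_setI0/(disjointWl _ dAR)/subsetP => u; rewrite inE => /andP[].
Qed.

Lemma snort_le_nat k (A B R : {set T}) m :
  #|A| <= m -> game_le (snort_fuel e k A B R) (nat_game m).
Proof.
have no_right m' X : ~ List.In X (rightopts (nat_game m')) by case: m' => [|?] [].
elim: k A B R m => [|k IHk] A B R m leAm; constructor=> X //; try by move/no_right.
case/In_map_enum=> v vA [_ ->].
have := leq_trans (card_snort_move (snort_nbhd e A v :&: R) vA) leAm.
case: m {leAm} => // m ltm; apply: (@game_lf_left _ _ (nat_game m)); first by left.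
exact: IHk.
Qed.

Lemma nat_neg_le_snort k (A B R : {set T}) m :
  #|A| <= m -> game_le (game_neg (nat_game m)) (snort_fuel e k A B R).
Proof. by move=> leAm; rewrite -snort_fuel_neg; apply/game_le_neg/snort_le_nat. Qed.

Lemma nat_le_snort_blue k (A B R : {set T}) :
  A \subset B -> [disjoint A & R] -> #|A| <= k ->
  game_le (nat_game #|A|) (snort_fuel e k A B R).
Proof.
elim: k A B R => [|k IHk] A B R sAB dAR.
  by rewrite leqn0 => /eqP->; constructor.
move=> leAk; constructor=> X; last first.
  by case/In_map_enum=> v vA [/negP[]]; apply: (subsetP sAB).
have [->|[v vA]] := set_0Vmem A; first by rewrite cards0.
rewrite (cardsD1 v A) vA => -[<-|//].
apply: game_lf_left (snort_fuel e k (snortL_A e A R v) (snortL_B e A B v) R) _ _.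
  by apply/In_map_enum; exists v; rewrite ?(disjointFr dAR vA).
rewrite snortL_A_disjoint //; apply: IHk.
- exact: subset_trans (subD1set A v) (subset_trans sAB (subsetUl _ _)).
- exact: disjointWl (subD1set A v) dAR.
- by move: leAk; rewrite (cardsD1 v A) vA.
Qed.

End SnortBounds.

Lemma snortL_star_centre n :
  snortL_A (star_rel n) [set: 'I_n.+1] set0 ord0 = [set~ ord0] /\
  snortL_B (star_rel n) [set: 'I_n.+1] set0 ord0 = [set~ ord0].
Proof.
rewrite snortL_A_disjoint ?setTD; last by rewrite -setI_eq0 setI0.
split=> //.
by apply/setP=> u; rewrite !inE /star_rel eqxx; case: (u == ord0).
Qed.

Lemma game_pm_nat_le_snort_star n :
  game_le (game_pm (nat_game n)) (snort (star_rel n) [set: 'I_n.+1] set0 set0).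
Proof.
rewrite /snort cardsT card_ord; constructor=> X /=.
  case=> [<-|//]; have [eAL eBL] := snortL_star_centre n.
  apply: game_lf_left (snort_fuel _ n [set~ ord0] [set~ ord0] set0) _ _.
    by apply/In_map_enum; exists ord0; rewrite ?in_setT ?in_set0 ?eAL ?eBL.
  have card_leaves : #|[set~ (ord0 : 'I_n.+1)]| = n by rewrite cardsC1 card_ord.
  rewrite -{1}card_leaves; apply: nat_le_snort_blue; rewrite ?card_leaves //.
  by rewrite -setI_eq0 setI0.
case/In_map_enum=> v vT [_ ->].
apply: game_lf_right (game_neg (nat_game n)) _ _; first by left.
apply: nat_neg_le_snort; rewrite -ltnS.
by apply: leq_trans (card_snort_move _ vT) _; rewrite cardsT card_ord.
Qed.

Theorem lemma3 (n : nat) (hn : 1 <= n) :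
  game_eq (snort (star_rel n) [set: 'I_n.+1] set0 set0)
          (game_pm (nat_game n)).
Proof.
set G := snort _ _ _ _.
have pm_le_G : game_le (game_pm (nat_game n)) G := game_pm_nat_le_snort_star n.
have G_neg : game_neg G = G by rewrite snort_fuel_neg.
split=> //; rewrite -G_neg -game_pm_nat_neg; exact: game_le_neg.
Qed.
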